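(* Fix real numbers $\alpha>0$ and $c>-1$ such that $\frac{\alpha}{1+c}\le\frac12$. If $v_1,\ldots,v_n$ are positive integers satisfying $\frac{v_i}{v_{i-1}}\ge i+c-1$ for all $2\le i\le n$, then $\mathrm{ML}(v_1,\ldots,v_n)\ge\frac{\alpha}{n+c}$.
   Context: For a real number $x$, $\Vert x\Vert$ denotes the distance from $x$ to the nearest integer. For positive integers $v_1,\ldots,v_n$, the maximum loneliness is $\mathrm{ML}(v_1,\ldots,v_n)=\max_{t\in\mathbb{R}}\min_{1\le i\le n}\Vert t v_i\Vert$. *)

From HB Require Import structures.
From mathcomp Require Import all_boot all_order all_algebra.
From mathcomp Require Import all_classical all_reals.
Set Implicit Arguments. Unset Strict Implicit. Unset Printing Implicit Defensive.
Import Order.TTheory GRing.Theory Num.Theory.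
Local Open Scope ring_scope.
Local Open Scope classical_set_scope.

Definition dist_int (R : realType) (x : R) : R :=
  Num.min (x - (Num.floor x)%:~R) ((Num.floor x)%:~R + 1 - x).

(* min_{1 <= i <= n} ||t v_i||  (for n >= 1; the neutral 1 is never reached
   in a meaningful way since ||.|| <= 1/2) *)
Definition loneliness (R : realType) (n : nat) (v : nat -> nat) (t : R) : R :=
  \big[Num.min/1]_(1 <= i < n.+1) dist_int (t * (v i)%:R).

(* ML(v_1,...,v_n) = max_t min_i ||t v_i||, written as the supremum over t
   (the maximum is attained, so this is the same value) *)
Definition ML (R : realType) (n : nat) (v : nat -> nat) : R :=
  sup (range (loneliness n v)).

(* If c >= 0, put d := alpha / (n + c) and build nested intervals I_1, ..., I_n
   such that ||t v_j|| >= d for t in I_i and j <= i, keeping the invariant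
   2 d (n - i) <= |I_i| v_i (i + c).  By the growth condition t v_{i+1} sweeps,
   as t runs over I_i, a segment of length at least (i + c) |I_i| v_i; it meets
   some window [k - 1 + d, k - d] in a piece of length at least
   min (1 - 2 d, |I_i| v_{i+1} / 2 - d), whose preimage is I_{i+1}.  The
   hypothesis 2 alpha <= 1 + c is exactly what makes this piece long enough to
   propagate the invariant.
   If -1 < c < 0, then alpha / (n + c) <= 1 / (2 n), and ML >= 1 / (2 n) holds
   for any positive integers: with M = v_1 ... v_n and N = 2 n M, each v_i puts
   k v_i within M of 0 mod N for at most 2 M - 1 residues k, so some t = k / N
   works for all i at once. *)

From mathcomp Require Import all_boot all_order all_algebra.
From mathcomp Require Import all_classical all_reals.
From mathcomp Require Import lra zify.
Import Order.TTheory GRing.Theory Num.Theory.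

Set Implicit Arguments.
Unset Strict Implicit.
Unset Printing Implicit Defensive.

Lemma sum_mod_period (f : nat -> nat) w P :
  \sum_(0 <= k < w * P) f (k %% P) = w * \sum_(0 <= r < P) f r.
Proof.
elim: w => [|w IH]; first by rewrite !mul0n big_geq.
rewrite mulSnr (big_cat_nat _ (n := w * P)) ?leq_addr // IH mulSnr; congr (_ + _).
rewrite -{1}[w * P]add0n big_addn addKn.
by apply: eq_big_nat => r /andP[_ rP]; rewrite addnC modnMDl modn_small.
Qed.

Lemma sum_indicator_ltn m P : m <= P -> \sum_(0 <= r < P) (r < m) = m.
Proof.
move=> mP; have := @big_nat_widen _ 0 addn 0 m P xpredT (fun=> 1) mP.
rewrite big_mkcond /= sum_nat_const_nat subn0 muln1 => {2}->.
by rewrite [RHS]big_mkcond; apply: eq_bigr => r _; case: (r < m).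
Qed.

Lemma sum_indicator_gtn m P : m <= P -> \sum_(0 <= r < P) (P - m < r) = m.-1.
Proof.
move=> mP; have m1P : m.-1 <= P := leq_trans (leq_pred m) mP.
rewrite big_nat_rev /= add0n -(sum_indicator_ltn m1P).
by apply: eq_big_nat => r /andP[_ rP]; congr nat_of_bool; lia.
Qed.

Definition near_zero_mod (P m x : nat) := (x %% P < m) || (P - m < x %% P).

Lemma sum_near_zero_mod_residues P m : m <= P ->
  \sum_(0 <= r < P) near_zero_mod P m r <= 2 * m - 1.
Proof.
move=> mP; apply: leq_trans (_ : \sum_(0 <= r < P) ((r < m) + (P - m < r)) <= _).
  rewrite big_nat_cond [leqRHS]big_nat_cond.
  apply: leq_sum => r /andP[/andP[_ rP] _]; rewrite /near_zero_mod modn_small //.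
  by case: (r < m); case: (P - m < r).
by rewrite big_split /= sum_indicator_ltn // sum_indicator_gtn //; lia.
Qed.

Lemma near_zero_mod_scale w P m x : 0 < w ->
  near_zero_mod (P * w) (m * w) (x * w) = near_zero_mod P m x.
Proof. by move=> w0; rewrite /near_zero_mod -muln_modl -mulnBl !ltn_pmul2r. Qed.

Lemma count_near_zero_mod_multiples w P m : 0 < w -> m <= P ->
  \sum_(0 <= k < w * P) near_zero_mod (P * w) (m * w) (k * w) <= w * (2 * m - 1).
Proof.
move=> w0 mP; rewrite (eq_bigr (fun k => near_zero_mod P m (k %% P) : nat)) => [|k _].
  rewrite (sum_mod_period (fun r => near_zero_mod P m r)) leq_mul2l.
  by rewrite sum_near_zero_mod_residues ?orbT.
by rewrite near_zero_mod_scale // /near_zero_mod modn_mod.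
Qed.

Lemma exists_sum_eq0 (f : nat -> nat) N :
  \sum_(0 <= k < N) f k < N -> exists2 k, k < N & f k = 0.
Proof.
move=> sum_lt.
have [/hasP[k]|/hasPn f_pos] := boolP (has (fun k => f k == 0) (index_iota 0 N)).
  by rewrite mem_index_iota => /andP[_ kN] /eqP; exists k.
move: sum_lt; rewrite ltnNge => /negP[].
rewrite -{1}[N]subn0 -[_ - _]muln1 -sum_nat_const_nat big_seq_cond [leqRHS]big_seq_cond.
by apply: leq_sum => k /andP[kN _]; rewrite lt0n f_pos.
Qed.

Lemma exists_far_from_zero_mod n (v : nat -> nat) M : 0 < n -> 0 < M ->
  (forall i, 1 <= i <= n -> 0 < v i /\ v i %| M) ->
  exists k, forall i, 1 <= i <= n -> ~~ near_zero_mod (2 * n * M) M (k * v i).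
Proof.
move=> n0 M0 hv; set N := 2 * n * M.
pose bad k := \sum_(1 <= i < n.+1) near_zero_mod N M (k * v i).
have bad_i i : 1 <= i <= n -> \sum_(0 <= k < N) near_zero_mod N M (k * v i) <= 2 * M - 1.
  move=> /hv[vi0 /dvdnP[m eM]].
  have mP : m <= 2 * n * m by rewrite -{1}[m]mul1n leq_mul2r muln_gt0 n0 orbT.
  have := count_near_zero_mod_multiples vi0 mP.
  have eN : 2 * n * m * v i = N by rewrite /N eM mulnA.
  rewrite -eM eN [v i * _]mulnC eN => /leq_trans; apply; nia.
have [k _ /eqP] : exists2 k, k < N & bad k = 0.
  apply: exists_sum_eq0; rewrite /bad exchange_big /=.
  apply: (@leq_ltn_trans (\sum_(1 <= i < n.+1) (2 * M - 1))).
    by rewrite big_nat [leqRHS]big_nat; apply: leq_sum => j /bad_i.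
  by rewrite sum_nat_const_nat /N; nia.
rewrite sum_nat_seq_eq0 => /allP bad0; exists k => i hi.
by have := bad0 i; rewrite mem_index_iota ltnS hi eqb0 => /(_ isT).
Qed.

Local Open Scope ring_scope.

Section Loneliness.
Variable R : realType.

Lemma dist_int_ge (u d : R) (j : int) : 0 < d ->
  j%:~R - 1 + d <= u -> u <= j%:~R - d -> d <= dist_int u.
Proof.
move=> d0 lo hi; have floor_u : Num.floor u = j - 1.
  by apply: floor_def; rewrite subrK intrD /=; apply/andP; split; lra.
by rewrite /dist_int floor_u le_min intrD /=; apply/andP; split; lra.
Qed.

Lemma exists_window (s L d : R) : 0 <= d -> 0 <= L ->
  exists (j : int) (s' e : R), [/\ s <= s', e <= s + L, j%:~R - 1 + d <= s',
    e <= j%:~R - d & Num.min (1 - 2 * d) (L / 2 - d) <= e - s'].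
Proof.
move=> d0 L0; set j := Num.floor (s + L / 2) + 1.
have lo : j%:~R - 1 <= s + L / 2 by rewrite intrD addrK floor_le.
have hi : s + L / 2 < j%:~R by rewrite floorD1_gt.
exists j, (Num.max s (j%:~R - 1 + d)), (Num.min (s + L) (j%:~R - d)).
split; rewrite ?le_max ?ge_min ?lexx ?orbT //.
case: (leP s (j%:~R - 1 + d)) => hs; case: (leP (s + L) (j%:~R - d)) => he; apply/orP;
  [right|left|right|right]; lra.
Qed.

Lemma exists_lonely_subinterval (a l d w : R) : 0 < d -> 0 <= l -> 0 < w ->
  exists a' l', [/\ a <= a', a' + l' <= a + l,
    Num.min (1 - 2 * d) (l * w / 2 - d) <= l' * w &
    forall t, a' <= t <= a' + l' -> d <= dist_int (t * w)].
Proof.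
move=> d0 l0 w0; have lw0 : 0 <= l * w by rewrite mulr_ge0 // ltW.
have [j [s' [e [as' ea js' ej len]]]] := exists_window (a * w) (ltW d0) lw0.
exists (s' / w), ((e - s') / w); split.
- by rewrite ler_pdivlMr.
- by rewrite -mulrDl addrC subrK ler_pdivrMr // mulrDl.
- by rewrite divfK // gt_eqF.
- move=> t /andP[]; rewrite -mulrDl addrC subrK ler_pdivrMr // ler_pdivlMr // => lo hi.
  by apply: (dist_int_ge (j := j) d0); lra.
Qed.

Lemma dist_int_le1 (u : R) : dist_int u <= 1.
Proof.
have := floorD1_gt u; rewrite /dist_int ge_min intrD /= => lt_floor.
by apply/orP; left; lra.
Qed.

Lemma le_ML n (v : nat -> nat) (t d : R) : (1 <= n)%N ->
  (forall j, (1 <= j <= n)%N -> d <= dist_int (t * (v j)%:R)) -> d <= ML R n v.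
Proof.
move=> n1 far; apply: le_trans (_ : loneliness n v t <= _).
  rewrite /loneliness big_nat_cond; apply: le_bigmin => [|j /andP[/andP[j1 jn] _]].
    by apply: le_trans (dist_int_le1 (t * (v 1)%:R)); apply: far; rewrite leqnn n1.
  by apply: far; rewrite j1 -ltnS.
apply: ub_le_sup; last by exists t.
by exists 1 => _ [s _ <-]; exact: bigmin_le_id.
Qed.

Lemma dist_int_div_ge (x N M : nat) : (0 < M)%N -> (0 < N)%N ->
  ~~ near_zero_mod N M x -> M%:R / N%:R <= dist_int (x%:R / N%:R : R).
Proof.
move=> M0 N0; rewrite /near_zero_mod negb_or -!leqNgt => /andP[Mr rN].
have N0' : 0 < N%:R :> R by rewrite ltr0n.
have x_split : x%:R / N%:R = (x %/ N)%:R + (x %% N)%:R / N%:R :> R.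
  by rewrite {1}(divn_eq x N) natrD natrM mulrDl mulfK ?gt_eqF.
have lo : M%:R / N%:R <= (x %% N)%:R / N%:R :> R by rewrite ler_pM2r ?invr_gt0 ?ler_nat.
have hi : (x %% N)%:R / N%:R <= 1 - M%:R / N%:R :> R.
  by rewrite lerBrDr -mulrDl -natrD ler_pdivrMr // mul1r ler_nat; lia.
rewrite x_split; apply: (dist_int_ge (j := (x %/ N).+1%:Z));
  rewrite ?divr_gt0 ?ltr0n // -[_%:~R]/(_.+1%:R : R) -natr1; lra.
Qed.

Lemma ML_ge_inv2n n (v : nat -> nat) : (0 < n)%N ->
  (forall i, (1 <= i <= n)%N -> (0 < v i)%N) -> (2 * n%:R)^-1 <= ML R n v.
Proof.
move=> n0 vpos; set M := (\prod_(1 <= j < n.+1) v j)%N.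
have vM i : (1 <= i <= n)%N -> (0 < v i)%N /\ (v i %| M)%N.
  move=> hi; split; first exact: vpos.
  by rewrite /M (bigD1_seq i) ?mem_index_iota ?iota_uniq ?ltnS //= dvdn_mulr.
have M0 : (0 < M)%N.
  by rewrite /M big_nat prodn_cond_gt0 // => j /vM[].
have [k far] := exists_far_from_zero_mod n0 M0 vM.
set N := (2 * n * M)%N.
have N0 : (0 < N)%N by rewrite /N !muln_gt0 n0 M0.
have inv2n : (2 * n%:R)^-1 = M%:R / N%:R :> R.
  by rewrite /N !natrM [in RHS]invfM mulrCA divff ?mulr1 // pnatr_eq0 -lt0n.
apply: (le_ML (t := k%:R / N%:R) n0) => j hj.
by rewrite inv2n mulrAC -natrM dist_int_div_ge // far.
Qed.

Lemma step_bound_window (c d m : R) (n i : nat) : 0 <= c ->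
  2 * d * (n%:R + c) <= 1 + c -> 1 - 2 * d <= m ->
  2 * d * (n%:R - i.+1%:R) <= m * (i.+1%:R + c).
Proof.
move=> c0 d_small m_ge; have i0 : 0 <= i%:R :> R by [].
have : (1 - 2 * d) * (i.+1%:R + c) <= m * (i.+1%:R + c).
  by rewrite ler_pM2r // -natr1; lra.
rewrite -natr1; nra.
Qed.

Lemma step_bound_half (c d L m : R) (n i : nat) : 0 <= c -> 0 <= d ->
  (1 <= i < n)%N -> 2 * d * (n%:R - i%:R) <= L -> L / 2 - d <= m ->
  2 * d * (n%:R - i.+1%:R) <= m * (i.+1%:R + c).
Proof.
move=> c0 d0 /andP[i1 iN] L_ge m_ge.
have i1' : 1 <= i%:R :> R by rewrite ler1n.
have iN' : i%:R + 1 <= n%:R :> R by rewrite natr1 ler_nat.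
have m_ge' : d * (n%:R - i%:R - 1) <= m by lra.
have : 0 <= d * (n%:R - i%:R - 1) by rewrite mulr_ge0 //; lra.
rewrite -natr1; nra.
Qed.

Section NestedIntervals.
Variables (c d : R) (n : nat) (v : nat -> nat).
Hypotheses (d_gt0 : 0 < d) (c_ge0 : 0 <= c) (d_small : 2 * d * (n%:R + c) <= 1 + c).
Hypothesis v_gt0 : forall i, (1 <= i <= n)%N -> (0 < v i)%N.
Hypothesis v_ratio : forall i, (1 <= i < n)%N -> (i%:R + c) * (v i)%:R <= (v i.+1)%:R.

Definition admissible_interval (i : nat) (a l : R) :=
  (forall t, a <= t <= a + l -> forall j, (1 <= j <= i)%N -> d <= dist_int (t * (v j)%:R))
  /\ 2 * d * (n%:R - i%:R) <= l * (v i)%:R * (i%:R + c).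

Lemma admissible_interval_base : (1 <= n)%N -> exists a l, admissible_interval 1 a l.
Proof.
move=> n1; have v1 : 0 < (v 1)%:R :> R by rewrite ltr0n v_gt0 ?n1.
have l0 : 0 <= 2 / (v 1)%:R :> R by rewrite divr_ge0 // ltW.
have [a [l [_ _ len far]]] := exists_lonely_subinterval 0 d_gt0 l0 v1.
exists a, l; split=> [t ht j /andP[j1 j1']|].
  have -> : j = 1%N by apply/eqP; rewrite eqn_leq j1 j1'.
  exact: far.
apply: (step_bound_window 0 c_ge0 d_small).
apply: le_trans len; rewrite divfK ?gt_eqF // le_min lexx /=.
by move: d_gt0; lra.
Qed.

Lemma admissible_interval_step i a l : (1 <= i < n)%N ->
  admissible_interval i a l -> exists a' l', admissible_interval i.+1 a' l'.
Proof.
move=> hi [far_i long]; have /andP[i1 iN] := hi.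
have vi : 0 < (v i)%:R :> R by rewrite ltr0n v_gt0 // i1 ltnW.
have vi1 : 0 < (v i.+1)%:R :> R by rewrite ltr0n v_gt0.
have ic : 0 < i%:R + c by rewrite ltr_wpDr // ltr0n.
have l_gt0 : 0 < l.
  have : 0 < 2 * d * (n%:R - i%:R) by rewrite !mulr_gt0 // subr_gt0 ltr_nat.
  by move=> /lt_le_trans /(_ long); rewrite -mulrA pmulr_lgt0 ?mulr_gt0.
have L_ge : 2 * d * (n%:R - i%:R) <= l * (v i.+1)%:R.
  by apply: le_trans long _; rewrite -mulrA ler_pM2l // mulrC v_ratio.
have [a' [l' [aa' al' len far]]] := exists_lonely_subinterval a d_gt0 (ltW l_gt0) vi1.
exists a', l'; split=> [t /andP[ta' tl'] j /andP[j1]|].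
  rewrite leq_eqVlt => /orP[/eqP-> | ji]; first by apply: far; rewrite ta' tl'.
  by apply: far_i; [apply/andP; split; lra | rewrite j1].
rewrite ge_min in len; case/orP: len => len.
  exact: step_bound_window c_ge0 d_small len.
exact: step_bound_half c_ge0 (ltW d_gt0) hi L_ge len.
Qed.

Lemma exists_admissible_interval i : (1 <= i <= n)%N ->
  exists a l, admissible_interval i a l.
Proof.
elim: i => [//|[_ /andP[_ n1]|i IH hi]]; first exact: admissible_interval_base.
have [a [l adm]] := IH (ltnW hi).
by apply: admissible_interval_step adm; rewrite -ltnS.
Qed.

Lemma ML_ge_growth : (1 <= n)%N -> d <= ML R n v.
Proof.
move=> n1; have hn : (1 <= n <= n)%N by rewrite n1 leqnn.
have [a [l [far long]]] := exists_admissible_interval hn.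
have vn : 0 < (v n)%:R :> R by rewrite ltr0n v_gt0.
have nc : 0 < n%:R + c by rewrite ltr_wpDr // ltr0n.
rewrite subrr mulr0 -mulrA pmulr_lge0 ?mulr_gt0 // in long.
by apply: (le_ML (t := a) n1) => j hj; apply: far; rewrite // lexx lerDl.
Qed.
End NestedIntervals.
End Loneliness.

Theorem proposition8p2 (R : realType) (alpha c : R) (n : nat) (v : nat -> nat)
  (halpha : 0 < alpha) (hc : -1 < c) (hac : alpha / (1 + c) <= 1 / 2)
  (hn : (1 <= n)%N)
  (hpos : forall i : nat, (1 <= i <= n)%N -> (0 < v i)%N)
  (hratio : forall i : nat, (2 <= i <= n)%N ->
     (v i)%:R / (v i.-1)%:R >= i%:R + c - 1) :
  alpha / (n%:R + c) <= ML R n v.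
Proof.
have n1 : 1 <= n%:R :> R by rewrite ler1n.
have alpha_small : 2 * alpha <= 1 + c by move: hac; rewrite ler_pdivrMr; lra.
have nc : 0 < n%:R + c by lra.
have [c0 | c_neg] := lerP 0 c.
  apply: (ML_ge_growth (c := c)) => //; first by rewrite divr_gt0.
    by rewrite -mulrA divfK ?gt_eqF.
  move=> i /andP[i1 iN]; have := hratio i.+1; rewrite ltnS i1 iN => /(_ isT).
  have vi : 0 < (v i)%:R :> R by rewrite ltr0n hpos // i1 ltnW.
  by rewrite /= ler_pdivlMr // -natr1 addrAC addrK.
apply: le_trans (ML_ge_inv2n R hn hpos); rewrite ler_pdivrMr //.
have inv2n_gt0 : 0 < (2 * n%:R)^-1 :> R by rewrite invr_gt0; lra.
have inv2nK : (2 * n%:R)^-1 * (2 * n%:R) = 1 :> R by rewrite mulVf //; lra.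
set x := (2 * n%:R)^-1 in inv2n_gt0 inv2nK *.
have x_le : x <= 1 / 2 by nra.
nra.
Qed.
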